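(* For $R_1,R_2\in\mathrm{DGRings}^{0,-1}$, the inclusion functor $\mathrm{Corr}_{\mathrm{adm}}(R_1,R_2)\hookrightarrow\mathrm{Corr}_{\mathrm{ana}}(R_1,R_2)$ has a left adjoint $\mathrm{Adm}:\mathrm{Corr}_{\mathrm{ana}}(R_1,R_2)\to\mathrm{Corr}_{\mathrm{adm}}(R_1,R_2)$.
   Context: Rings are commutative and unital. $\mathrm{DGRings}^{0,-1}$ is the category of commutative DG rings $R$ with $R^i=0$ for $i\ne 0,-1$. Equivalently, such $R$ is a ring $R^0$, an $R^0$-module $R^{-1}$ and an $R^0$-linear $d:R^{-1}\to R^0$ with $d(x)y=d(y)x$. Quasi-isomorphisms are morphisms inducing isomorphisms on $\ker d$ and $\operatorname{coker} d$. A correspondence from $R_1$ to $R_2$ is a diagram $R_1\xleftarrow{f}R_{12}\xrightarrow{g}R_2$ in $\mathrm{DGRings}^{0,-1}$. Morphisms of correspondences are maps $h$ of the middle terms with $f'h=f$, $g'h=g$. A correspondence is admissible if $f$ is a quasi-isomorphism and $R_{12}^{-1}\to R_1^{-1}\times R_2^{-1}$ is an isomorphism. It is an anamorphism if $f$ is a surjective quasi-isomorphism. $\mathrm{Corr}_{\mathrm{adm}}\subset\mathrm{Corr}_{\mathrm{ana}}$ are the corresponding full subcategories of the category of correspondences. *)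

From HB Require Import structures.
From mathcomp Require Import all_boot all_order all_algebra.
Set Implicit Arguments. Unset Strict Implicit. Unset Printing Implicit Defensive.
Import GRing.Theory.
Local Open Scope ring_scope.

(* A commutative DG ring concentrated in degrees 0 and -1:
   a commutative unital ring dg0 = R^0, an R^0-module dg1 = R^{-1},
   and an R^0-linear d : R^{-1} -> R^0 with d(x) y = d(y) x. *)
Record DGR := DGRing {
  dg0 : comPzRingType;
  dg1 : lmodType dg0;
  dgd : dg1 -> dg0;
  dgd_lin : forall (a : dg0) (x y : dg1), dgd (a *: x + y) = a * dgd x + dgd y;
  dgd_comm : forall x y : dg1, dgd x *: y = dgd y *: x }.

Record DGHom (A B : DGR) := DGHomMk {
  hm0 : {rmorphism dg0 A -> dg0 B};
  hm1 : dg1 A -> dg1 B;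
  hm1_lin : forall (a : dg0 A) (x y : dg1 A),
      hm1 (a *: x + y) = hm0 a *: hm1 x + hm1 y;
  hm_d : forall x : dg1 A, @dgd B (hm1 x) = hm0 (@dgd A x) }.

Definition dghom_comp_eq (A B C : DGR) (g : DGHom B C) (f : DGHom A B)
    (h : DGHom A C) : Prop :=
  (forall a, hm0 g (hm0 f a) = hm0 h a) /\ (forall x, hm1 g (hm1 f x) = hm1 h x).

Definition dghom_eq (A B : DGR) (f g : DGHom A B) : Prop :=
  (forall a, hm0 f a = hm0 g a) /\ (forall x, hm1 f x = hm1 g x).

(* f induces an isomorphism on H^{-1} = ker d *)
Definition iso_on_H1 (A B : DGR) (f : DGHom A B) : Prop :=
  (forall x : dg1 A, @dgd A x = 0 -> hm1 f x = 0 -> x = 0) /\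
  (forall y : dg1 B, @dgd B y = 0 -> exists x : dg1 A, @dgd A x = 0 /\ hm1 f x = y).

(* f induces an isomorphism on H^0 = coker d *)
Definition iso_on_H0 (A B : DGR) (f : DGHom A B) : Prop :=
  (forall a : dg0 A, (exists y : dg1 B, hm0 f a = @dgd B y) ->
                      exists x : dg1 A, a = @dgd A x) /\
  (forall b : dg0 B, exists a : dg0 A, exists y : dg1 B, b - hm0 f a = @dgd B y).

Definition quasi_iso (A B : DGR) (f : DGHom A B) : Prop :=
  iso_on_H1 f /\ iso_on_H0 f.

Definition dg_surjective (A B : DGR) (f : DGHom A B) : Prop :=
  (forall b : dg0 B, exists a, hm0 f a = b) /\
  (forall y : dg1 B, exists x, hm1 f x = y).

Record Corr (R1 R2 : DGR) := CorrMk {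
  cmid : DGR;
  cf : DGHom cmid R1;
  cg : DGHom cmid R2 }.

Record CorrHom (R1 R2 : DGR) (C D : Corr R1 R2) := CorrHomMk {
  ch : DGHom (cmid C) (cmid D);
  ch_f : dghom_comp_eq (cf D) ch (cf C);
  ch_g : dghom_comp_eq (cg D) ch (cg C) }.

Definition corrhom_comp_eq (R1 R2 : DGR) (C D E : Corr R1 R2)
    (k : CorrHom D E) (e : CorrHom C D) (h : CorrHom C E) : Prop :=
  dghom_comp_eq (ch k) (ch e) (ch h).

Definition corrhom_eq (R1 R2 : DGR) (C D : Corr R1 R2) (h k : CorrHom C D) : Prop :=
  dghom_eq (ch h) (ch k).

Definition is_admissible (R1 R2 : DGR) (C : Corr R1 R2) : Prop :=
  quasi_iso (cf C) /\
  bijective (fun x : dg1 (cmid C) => (hm1 (cf C) x, hm1 (cg C) x)).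

Definition is_anamorphism (R1 R2 : DGR) (C : Corr R1 R2) : Prop :=
  quasi_iso (cf C) /\ dg_surjective (cf C).

(* Write C as R1 <-f- M -g-> R2 with f a surjective quasi-isomorphism.  The
   admissible hull A of C has A^{-1} = R1^{-1} x R2^{-1}, and A^0 is the
   quotient of M^0 (+) R2^{-1}, where (a, y) stands for a + dy, by the ideal
   of the (dk, -gk) with fk = 0.  The legs of A send (a, y) to fa and to
   ga + dy, the differential sends (x1, x2) to the class of (dm, x2 - gm) for
   any lift m of x1 along f, and C -> A is a |-> (a, 0), k |-> (fk, gk).
   A -> R1 inherits being a quasi-isomorphism from f: a cycle (0, y) of A
   is (dk, -gk) for a cycle k in ker f, so k = 0 and y = 0; and a class
   (a, y) with fa a boundary has a = dm, so it is d (fm, y + gm).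
   If D is admissible, its degree -1 part is R1^{-1} x R2^{-1} through some
   psi, and a morphism h : C -> D factors through A as psi in degree -1 and
   (a, y) |-> ha + d psi(0, y) in degree 0.  The factorization is unique
   because A^{-1} is detected by the legs and A^0 is generated by the image
   of M^0 and the boundaries. *)

From HB Require Import structures.
From mathcomp Require Import all_boot all_order all_algebra.
From mathcomp Require Import boolp ring.
Set Implicit Arguments.
Unset Strict Implicit.
Unset Printing Implicit Defensive.
Import GRing.Theory.
Local Open Scope ring_scope.
Local Open Scope quotient_scope.

Section DGRingTheory.
Variable A : DGR.

Lemma dgdD (x y : dg1 A) : dgd (x + y) = dgd x + dgd y.
Proof. by rewrite -[x]scale1r dgd_lin mul1r scale1r. Qed.

Lemma dgd0 : @dgd A 0 = 0.
Proof. by apply: (addrI (dgd (0 : dg1 A))); rewrite -dgdD !addr0. Qed.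

Lemma dgdZ a (x : dg1 A) : dgd (a *: x) = a * dgd x.
Proof. by rewrite -[a *: x]addr0 dgd_lin dgd0 addr0. Qed.

Lemma dgdN (x : dg1 A) : dgd (- x) = - dgd x.
Proof. by rewrite -scaleN1r dgdZ mulN1r. Qed.

Lemma dgdB (x y : dg1 A) : dgd (x - y) = dgd x - dgd y.
Proof. by rewrite dgdD dgdN. Qed.

End DGRingTheory.

Section DGHomTheory.
Variables (A B : DGR) (h : DGHom A B).

Lemma hm1D x y : hm1 h (x + y) = hm1 h x + hm1 h y.
Proof. by rewrite -[x]scale1r hm1_lin rmorph1 !scale1r. Qed.

Lemma hm10 : hm1 h 0 = 0.
Proof. by apply: (addrI (hm1 h 0)); rewrite -hm1D !addr0. Qed.

Lemma hm1Z a x : hm1 h (a *: x) = hm0 h a *: hm1 h x.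
Proof. by rewrite -[a *: x]addr0 hm1_lin hm10 addr0. Qed.

Lemma hm1N x : hm1 h (- x) = - hm1 h x.
Proof. by rewrite -scaleN1r hm1Z rmorphN1 scaleN1r. Qed.

Lemma hm1B x y : hm1 h (x - y) = hm1 h x - hm1 h y.
Proof. by rewrite hm1D hm1N. Qed.

End DGHomTheory.

(* ring_quotient only quotients nontrivial rings by proper ideals, while the
   quotient built below may be the zero ring.  The ideal property is a
   phantom argument of [ideal_quot] so that the ring structure is canonical. *)
Section IdealQuotient.
Variables (R : comPzRingType) (I : zmodClosed R).
Hypothesis idealI : forall a u, u \in I -> a * u \in I.

Definition ideal_quot of (forall a u, u \in I -> a * u \in I) : Type :=
  Quotient.quot I.
Local Notation Q := (ideal_quot idealI).

HB.instance Definition _ := EqQuotient.on Q.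
HB.instance Definition _ := Choice.on Q.
HB.instance Definition _ := GRing.Zmodule.on Q.
HB.instance Definition _ := ZmodQuotient.on Q.

Lemma pi_eqP x y : \pi_Q x = \pi_Q y <-> x - y \in I.
Proof. by split => [/eqP|?]; [|apply/eqP]; rewrite piE. Qed.

Definition qone : Q := lift_cst Q 1.
Definition qmul := lift_op2 Q *%R.
Canonical pi_one_morph := PiConst qone.

Lemma pi_mul : {morph \pi_Q : x y / x * y >-> qmul x y}.
Proof.
move=> x y; unlock qmul; apply/pi_eqP.
have Ix : repr (\pi_Q x) - x \in I by apply/pi_eqP; rewrite reprK.
have Iy : repr (\pi_Q y) - y \in I by apply/pi_eqP; rewrite reprK.
have -> : x * y - repr (\pi_Q x) * repr (\pi_Q y) =
  - (x * (repr (\pi_Q y) - y) + repr (\pi_Q y) * (repr (\pi_Q x) - x)) by ring.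
by rewrite rpredN rpredD // idealI.
Qed.
Canonical pi_mul_morph := PiMorph2 pi_mul.

Lemma qmulA : associative qmul.
Proof. by move=> x y z; rewrite -[x]reprK -[y]reprK -[z]reprK !piE mulrA. Qed.

Lemma qmulC : commutative qmul.
Proof. by move=> x y; rewrite -[x]reprK -[y]reprK !piE mulrC. Qed.

Lemma qmul1 : left_id qone qmul.
Proof. by move=> x; rewrite -[x]reprK !piE mul1r. Qed.

Lemma qmulDl : left_distributive qmul +%R.
Proof. by move=> x y z; rewrite -[x]reprK -[y]reprK -[z]reprK !piE mulrDl. Qed.

HB.instance Definition _ :=
  GRing.Zmodule_isComPzRing.Build Q qmulA qmulC qmul1 qmulDl.

Definition qpi : R -> Q := \pi_Q.

Lemma qpi_is_zmod : zmod_morphism qpi.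
Proof. by move=> x y; rewrite /qpi !piE. Qed.

Lemma qpi_is_monoid : monoid_morphism qpi.
Proof. by split => [|x y]; rewrite /qpi !piE. Qed.

HB.instance Definition _ := GRing.isZmodMorphism.Build R Q qpi qpi_is_zmod.
HB.instance Definition _ := GRing.isMonoidMorphism.Build R Q qpi qpi_is_monoid.

Lemma qpi_surj (q : Q) : exists x, q = qpi x.
Proof. by exists (repr q); rewrite /qpi reprK. Qed.

Section Lift.
Variables (S : comPzRingType) (phi : {rmorphism R -> S}).
Hypothesis phiI : {in I, forall u, phi u = 0}.

Definition quot_lift of {in I, forall u, phi u = 0} :=
  fun q : Q => phi (repr q).

Lemma quot_lift_pi x : quot_lift phiI (qpi x) = phi x.
Proof.
have /pi_eqP Ix : qpi (repr (qpi x)) = qpi x by rewrite /qpi reprK.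
by apply/eqP; rewrite -subr_eq0 -rmorphB phiI.
Qed.

Lemma quot_lift_is_zmod : zmod_morphism (quot_lift phiI).
Proof.
move=> q r; have [[x ->] [y ->]] := (qpi_surj q, qpi_surj r).
by rewrite -rmorphB !quot_lift_pi rmorphB.
Qed.

Lemma quot_lift_is_monoid : monoid_morphism (quot_lift phiI).
Proof.
split=> [|q r]; first by rewrite -(rmorph1 qpi) quot_lift_pi rmorph1.
have [[x ->] [y ->]] := (qpi_surj q, qpi_surj r).
by rewrite -rmorphM !quot_lift_pi rmorphM.
Qed.

HB.instance Definition _ := GRing.isZmodMorphism.Build Q S (quot_lift phiI)
  quot_lift_is_zmod.
HB.instance Definition _ := GRing.isMonoidMorphism.Build Q S (quot_lift phiI)
  quot_lift_is_monoid.

End Lift.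
End IdealQuotient.

Section ExtRing.
Variables (M R2 : DGR) (g : DGHom M R2).

Definition ext_ring of DGHom M R2 : Type := (dg0 M * dg1 R2)%type.
Local Notation B := (ext_ring g).
HB.instance Definition _ := GRing.Zmodule.on B.

(* The product expands (a + dy) (a' + dy') = aa' + a dy' + (a' + dy') dy. *)
Definition ext_val (u : B) : dg0 R2 := hm0 g u.1 + dgd u.2.

Definition ext_mul (u v : B) : B :=
  (u.1 * v.1, hm0 g u.1 *: v.2 + ext_val v *: u.2).

Lemma ext_valM u v : ext_val (ext_mul u v) = ext_val u * ext_val v.
Proof. by rewrite /ext_mul /ext_val /= rmorphM dgdD !dgdZ; ring. Qed.

Lemma ext_mulA : associative ext_mul.
Proof.
move=> u v w; congr (_, _); rewrite /= ?mulrA // ext_valM !scalerDr !scalerA.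
by rewrite rmorphM addrA [ext_val w * _]mulrC [ext_val w * _]mulrC.
Qed.

Lemma ext_mulC : commutative ext_mul.
Proof.
move=> u v; congr (_, _); rewrite /= 1?mulrC // /ext_val !scalerDl dgd_comm.
by rewrite addrCA addrA.
Qed.

Lemma ext_mul1 : left_id (1, 0) ext_mul.
Proof.
by move=> [a y]; rewrite /ext_mul /= mul1r rmorph1 scale1r scaler0 addr0.
Qed.

Lemma ext_mulDl : left_distributive ext_mul +%R.
Proof.
move=> u v w; congr (_, _); rewrite /= ?mulrDl // rmorphD scalerDl scalerDr.
by rewrite addrACA.
Qed.

HB.instance Definition _ :=
  GRing.Zmodule_isComPzRing.Build B ext_mulA ext_mulC ext_mul1 ext_mulDl.

Lemma ext_mulE (u v : B) : u * v = ext_mul u v. Proof. by []. Qed.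

Lemma ext_val_is_zmod : zmod_morphism ext_val.
Proof. by move=> u v; rewrite /ext_val /= rmorphB dgdB addrACA opprD. Qed.

Lemma ext_val_is_monoid : monoid_morphism ext_val.
Proof.
by split=> [|u v]; [rewrite /ext_val /= rmorph1 dgd0 addr0 | exact: ext_valM].
Qed.

HB.instance Definition _ := GRing.isZmodMorphism.Build B (dg0 R2) ext_val
  ext_val_is_zmod.
HB.instance Definition _ := GRing.isMonoidMorphism.Build B (dg0 R2) ext_val
  ext_val_is_monoid.

Definition ext_fst (u : B) : dg0 M := u.1.

Lemma ext_fst_is_zmod : zmod_morphism ext_fst. Proof. by []. Qed.
Lemma ext_fst_is_monoid : monoid_morphism ext_fst. Proof. by []. Qed.

HB.instance Definition _ := GRing.isZmodMorphism.Build B (dg0 M) ext_fst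
  ext_fst_is_zmod.
HB.instance Definition _ := GRing.isMonoidMorphism.Build B (dg0 M) ext_fst
  ext_fst_is_monoid.

Definition ext_in (a : dg0 M) : B := (a, 0).

Lemma ext_in_is_zmod : zmod_morphism ext_in.
Proof. by move=> a b; rewrite /ext_in; congr (_, _); rewrite /= subr0. Qed.

Lemma ext_in_is_monoid : monoid_morphism ext_in.
Proof.
by split=> [|a b] //; rewrite ext_mulE /ext_mul /= !scaler0 addr0.
Qed.

HB.instance Definition _ := GRing.isZmodMorphism.Build (dg0 M) B ext_in
  ext_in_is_zmod.
HB.instance Definition _ := GRing.isMonoidMorphism.Build (dg0 M) B ext_in
  ext_in_is_monoid.

End ExtRing.

Section PairLmod.
Variables (S R1 R2 : pzRingType) (V1 : lmodType R1) (V2 : lmodType R2).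
Variables (p1 : {rmorphism S -> R1}) (p2 : {rmorphism S -> R2}).

Definition pair_lmod of {rmorphism S -> R1} & {rmorphism S -> R2} : Type :=
  (V1 * V2)%type.
Local Notation P := (pair_lmod p1 p2).
HB.instance Definition _ := GRing.Zmodule.on P.

Definition pair_scale (a : S) (u : P) : P := (p1 a *: u.1, p2 a *: u.2).

Lemma pair_scaleA a b u : pair_scale a (pair_scale b u) = pair_scale (a * b) u.
Proof. by rewrite /pair_scale /= !rmorphM !scalerA. Qed.

Lemma pair_scale1 : left_id 1 pair_scale.
Proof. by move=> [x y]; rewrite /pair_scale /= !rmorph1 !scale1r. Qed.

Lemma pair_scaleDr : right_distributive pair_scale +%R.
Proof. by move=> a u v; rewrite /pair_scale /= !scalerDr. Qed.

Lemma pair_scaleDl u : {morph pair_scale^~ u : a b / a + b}.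
Proof. by move=> a b; rewrite /pair_scale /= !rmorphD !scalerDl. Qed.

HB.instance Definition _ := GRing.Zmodule_isLmodule.Build S P
  pair_scaleA pair_scale1 pair_scaleDr pair_scaleDl.

Lemma pair_scaleE a (u : P) : a *: u = (p1 a *: u.1, p2 a *: u.2).
Proof. by []. Qed.

End PairLmod.

Section AdmissibleHull.
Variables (R1 R2 M : DGR) (f : DGHom M R1) (g : DGHom M R2).
Local Notation B := (ext_ring g).

Definition adm_ideal : {pred B} :=
  fun u => `[< exists2 k, hm1 f k = 0 & u = (dgd k, - hm1 g k) >].

Lemma adm_idealP u :
  reflect (exists2 k, hm1 f k = 0 & u = (dgd k, - hm1 g k)) (u \in adm_ideal).
Proof. exact: asboolP. Qed.

Lemma adm_ideal_zmod_closed : zmod_closed adm_ideal.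
Proof.
split=> [|u v /adm_idealP[k fk ->] /adm_idealP[l fl ->]]; apply/adm_idealP.
  by exists 0; rewrite ?hm10 ?dgd0 ?oppr0.
exists (k - l); first by rewrite hm1B fk fl subrr.
by rewrite dgdB hm1B opprB; congr (_, _); rewrite /= opprK addrC.
Qed.

HB.instance Definition _ :=
  GRing.isZmodClosed.Build B adm_ideal adm_ideal_zmod_closed.

Lemma ext_val_dgdB k y : ext_val ((dgd k, y - hm1 g k) : B) = dgd y.
Proof. by rewrite /ext_val /= dgdB hm_d addrC subrK. Qed.

Lemma ext_val_dgdN k : ext_val ((dgd k, - hm1 g k) : B) = 0.
Proof. by rewrite -[- _]sub0r ext_val_dgdB dgd0. Qed.

Lemma adm_idealM a u : u \in adm_ideal -> a * u \in adm_ideal.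
Proof.
case/adm_idealP=> k fk ->; apply/adm_idealP; exists (a.1 *: k).
  by rewrite hm1Z fk scaler0.
by rewrite ext_mulE /ext_mul ext_val_dgdN scale0r addr0 /= dgdZ hm1Z scalerN.
Qed.

Definition adm0 := ideal_quot adm_idealM.
Local Notation pi := (qpi adm_idealM).

Lemma f_ext_fst_ideal :
  {in adm_ideal, forall u, (hm0 f \o ext_fst (g:=g)) u = 0}.
Proof. by move=> u /adm_idealP[k fk ->]; rewrite /= -hm_d fk dgd0. Qed.

Lemma ext_val_ideal : {in adm_ideal, forall u, ext_val u = 0}.
Proof. by move=> u /adm_idealP[k fk ->]; rewrite ext_val_dgdN. Qed.

Definition adm_f0 : {rmorphism adm0 -> dg0 R1} :=
  quot_lift (idealI := adm_idealM) f_ext_fst_ideal.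
Definition adm_g0 : {rmorphism adm0 -> dg0 R2} :=
  quot_lift (idealI := adm_idealM) ext_val_ideal.

Lemma adm_f0_pi b : adm_f0 (pi b) = hm0 f b.1.
Proof. exact: quot_lift_pi. Qed.

Lemma adm_g0_pi b : adm_g0 (pi b) = ext_val b.
Proof. exact: quot_lift_pi. Qed.

Definition adm1 := pair_lmod (dg1 R1) (dg1 R2) adm_f0 adm_g0.

Variable s : dg1 R1 -> dg1 M.
Hypothesis sK : cancel s (hm1 f).

Definition adm_d (u : adm1) : adm0 := pi (dgd (s u.1), u.2 - hm1 g (s u.1)).

Lemma adm_dE m y : adm_d (hm1 f m, y) = pi (dgd m, y - hm1 g m).
Proof.
apply/pi_eqP/adm_idealP; exists (s (hm1 f m) - m).
  by rewrite hm1B sK subrr.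
by rewrite dgdB hm1B opprB; congr (_, _); rewrite /= opprB addrC addrA subrK.
Qed.

Lemma adm_d_lin a (u v : adm1) : adm_d (a *: u + v) = a * adm_d u + adm_d v.
Proof.
have [b ->] := qpi_surj a; case: u v => [x y] [x' y'].
rewrite -(sK x) -(sK x'); move: (s x) (s x') => m n.
rewrite pair_scaleE adm_f0_pi adm_g0_pi -hm1Z.
have -> : ((hm1 f (b.1 *: m), ext_val b *: y) + (hm1 f n, y') : adm1) =
    (hm1 f (b.1 *: m + n), ext_val b *: y + y') by rewrite hm1D.
rewrite !adm_dE -rmorphM -rmorphD; congr pi.
rewrite ext_mulE /ext_mul /=; congr (_, _); first by rewrite dgdD dgdZ.
rewrite ext_val_dgdB /ext_val scalerDl dgd_comm hm1D hm1Z scalerBr opprD.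
by rewrite /= [_ - _ + _ in RHS]addrAC addrACA.
Qed.

Lemma adm_f0_d u : adm_f0 (adm_d u) = dgd u.1.
Proof. by rewrite adm_f0_pi /= -hm_d sK. Qed.

Lemma adm_g0_d u : adm_g0 (adm_d u) = dgd u.2.
Proof. by rewrite adm_g0_pi ext_val_dgdB. Qed.

Lemma adm_d_comm (u v : adm1) : adm_d u *: v = adm_d v *: u.
Proof.
by rewrite !pair_scaleE !adm_f0_d !adm_g0_d dgd_comm [dgd u.2 *: _]dgd_comm.
Qed.

Definition adm_dgr : DGR := DGRing adm_d_lin adm_d_comm.

Lemma adm_f_lin a (x y : adm1) : (a *: x + y).1 = adm_f0 a *: x.1 + y.1.
Proof. by []. Qed.

Lemma adm_g_lin a (x y : adm1) : (a *: x + y).2 = adm_g0 a *: x.2 + y.2.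
Proof. by []. Qed.

Lemma adm_f_d (x : adm1) : dgd x.1 = adm_f0 (adm_d x).
Proof. by rewrite adm_f0_d. Qed.

Lemma adm_g_d (x : adm1) : dgd x.2 = adm_g0 (adm_d x).
Proof. by rewrite adm_g0_d. Qed.

Definition adm_f : DGHom adm_dgr R1 :=
  @DGHomMk adm_dgr R1 adm_f0 (fun x => x.1) adm_f_lin adm_f_d.
Definition adm_g : DGHom adm_dgr R2 :=
  @DGHomMk adm_dgr R2 adm_g0 (fun x => x.2) adm_g_lin adm_g_d.
Definition adm_corr : Corr R1 R2 := CorrMk adm_f adm_g.

Definition adm_unit0 : {rmorphism dg0 M -> adm0} := pi \o ext_in g.
Definition adm_unit1 (x : dg1 M) : adm1 := (hm1 f x, hm1 g x).

Lemma adm_f0_unit a : adm_f0 (adm_unit0 a) = hm0 f a.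
Proof. exact: adm_f0_pi. Qed.

Lemma adm_g0_unit a : adm_g0 (adm_unit0 a) = hm0 g a.
Proof. by rewrite [LHS](adm_g0_pi (ext_in g a)) /ext_val dgd0 addr0. Qed.

Lemma adm_unit_lin a x y :
  adm_unit1 (a *: x + y) = adm_unit0 a *: adm_unit1 x + adm_unit1 y.
Proof.
by rewrite pair_scaleE adm_f0_unit adm_g0_unit /adm_unit1 !hm1D !hm1Z.
Qed.

Lemma adm_unit_d x : adm_d (adm_unit1 x) = adm_unit0 (dgd x).
Proof. by rewrite adm_dE subrr. Qed.

Definition adm_unit : DGHom M adm_dgr :=
  @DGHomMk M adm_dgr adm_unit0 adm_unit1 adm_unit_lin adm_unit_d.

Lemma adm_unit_f : dghom_comp_eq adm_f adm_unit f.
Proof. by split=> [a|x] //; exact: adm_f0_unit. Qed.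

Lemma adm_unit_g : dghom_comp_eq adm_g adm_unit g.
Proof. by split=> [a|x] //; exact: adm_g0_unit. Qed.

Definition adm_unit_corr : CorrHom (CorrMk f g) adm_corr :=
  @CorrHomMk _ _ (CorrMk f g) adm_corr adm_unit adm_unit_f adm_unit_g.

Lemma adm_d0 y : adm_d (0, y) = pi (0, y).
Proof. by rewrite -(hm10 f) adm_dE hm10 dgd0 subr0. Qed.

Lemma pi_decomp b : pi b = adm_unit0 b.1 + adm_d (0, b.2).
Proof.
rewrite adm_d0 -[adm_unit0 _]/(pi (b.1, 0)) -rmorphD.
by case: b => a y; congr (pi (_, _)); rewrite /= ?addr0 ?add0r.
Qed.

Lemma adm_f_iso_on_H1 : iso_on_H1 f -> iso_on_H1 adm_f.
Proof.
case=> H1inj H1surj; split=> [[x y] /= dxy x0|y /= dy].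
  move: dxy; rewrite x0 adm_d0 -(rmorph0 pi) => /pi_eqP.
  rewrite subr0 => /adm_idealP[k fk [dk ->]].
  by rewrite (H1inj k) ?hm10 ?oppr0.
have [m [dm fm]] := H1surj y dy.
by exists (adm_unit1 m); rewrite adm_unit_d dm rmorph0.
Qed.

Lemma adm_f_iso_on_H0 :
  iso_on_H0 f -> (forall c, exists a, hm0 f a = c) -> iso_on_H0 adm_f.
Proof.
case=> H0inj _ surj0; split=> [a|c].
  have [b ->] := qpi_surj a; case=> y fy.
  have [m dm] : exists m, b.1 = dgd m.
    by apply: H0inj; exists y; rewrite -adm_f0_pi.
  exists ((hm1 f m, b.2 + hm1 g m) : adm1).
  by rewrite /= adm_dE addrK -dm; case: b {dm fy}.
have [a fa] := surj0 c; exists (adm_unit0 a), 0.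
by rewrite dgd0 -fa -(adm_f0_unit a) subrr.
Qed.

Lemma adm_corr_admissible :
  quasi_iso f -> (forall c, exists a, hm0 f a = c) -> is_admissible adm_corr.
Proof.
case=> qH1 qH0 surj0; split; last by exists id => -[].
by split; [exact: adm_f_iso_on_H1 | exact: adm_f_iso_on_H0].
Qed.

Variables (D : Corr R1 R2) (h : CorrHom (CorrMk f g) D).
Local Notation N := (cmid D).
Local Notation fD := (cf D).
Local Notation gD := (cg D).

Variable psi : dg1 R1 * dg1 R2 -> dg1 N.
Hypothesis psiK : cancel (fun w => (hm1 fD w, hm1 gD w)) psi.
Hypothesis psiVK : cancel psi (fun w => (hm1 fD w, hm1 gD w)).

Lemma psiE w p : hm1 fD w = p.1 -> hm1 gD w = p.2 -> psi p = w.
Proof. by case: p => x y /= <- <-. Qed.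

Lemma fD_psi p : hm1 fD (psi p) = p.1.
Proof. by rewrite -[in RHS](psiVK p). Qed.

Lemma gD_psi p : hm1 gD (psi p) = p.2.
Proof. by rewrite -[in RHS](psiVK p). Qed.

Lemma psiD p q : psi (p + q) = psi p + psi q.
Proof. by apply: psiE; rewrite hm1D ?fD_psi ?gD_psi. Qed.

Lemma psiB p q : psi (p - q) = psi p - psi q.
Proof. by apply: psiE; rewrite hm1B ?fD_psi ?gD_psi. Qed.

Lemma psi00 : psi (0, 0) = 0.
Proof. by apply: psiE; rewrite hm10. Qed.

Lemma psi0D y z : psi (0, y + z) = psi (0, y) + psi (0, z).
Proof. by apply: psiE; rewrite hm1D ?fD_psi ?gD_psi //= addr0. Qed.

Lemma psi0Z a y : psi (0, hm0 gD a *: y) = a *: psi (0, y).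
Proof. by apply: psiE; rewrite hm1Z ?fD_psi ?gD_psi //= scaler0. Qed.

Lemma psi_unit x : psi (hm1 f x, hm1 g x) = hm1 (ch h) x.
Proof. by apply: psiE; [rewrite (ch_f h).2 | rewrite (ch_g h).2]. Qed.

Definition ext_factor (u : ext_ring g) : dg0 N :=
  hm0 (ch h) u.1 + dgd (psi (0, u.2)).

Lemma fD_ext_factor u : hm0 fD (ext_factor u) = hm0 f u.1.
Proof. by rewrite rmorphD (ch_f h).1 -hm_d fD_psi dgd0 addr0. Qed.

Lemma gD_ext_factor u : hm0 gD (ext_factor u) = ext_val u.
Proof. by rewrite rmorphD (ch_g h).1 -hm_d gD_psi. Qed.

Lemma ext_factor_is_zmod : zmod_morphism ext_factor.
Proof.
move=> u v; rewrite /ext_factor /= rmorphB.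
have -> : ((0, u.2 - v.2) : dg1 R1 * dg1 R2) = (0, u.2) - (0, v.2).
  by congr (_, _); rewrite /= subr0.
by rewrite psiB dgdB opprD addrACA.
Qed.

Lemma ext_factor_is_monoid : monoid_morphism ext_factor.
Proof.
split=> [|u v]; first by rewrite /ext_factor rmorph1 psi00 dgd0 addr0.
rewrite /ext_factor ext_mulE /ext_mul /= -(ch_g h).1 -gD_ext_factor.
rewrite psi0D !psi0Z rmorphM dgdD !dgdZ /ext_factor; ring.
Qed.

HB.instance Definition _ := GRing.isZmodMorphism.Build _ _ ext_factor
  ext_factor_is_zmod.
HB.instance Definition _ := GRing.isMonoidMorphism.Build _ _ ext_factor
  ext_factor_is_monoid.

Lemma ext_factor_ideal : {in adm_ideal, forall u, ext_factor u = 0}.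
Proof.
move=> u /adm_idealP[k fk ->].
rewrite /ext_factor /= (psiE (w := - hm1 (ch h) k)).
  by rewrite dgdN hm_d subrr.
all: by rewrite hm1N ?(ch_f h).2 ?(ch_g h).2 ?fk ?oppr0.
Qed.

Definition adm_factor0 : {rmorphism adm0 -> dg0 N} :=
  quot_lift (idealI := adm_idealM) ext_factor_ideal.

Lemma adm_factor0_pi b : adm_factor0 (pi b) = ext_factor b.
Proof. exact: quot_lift_pi. Qed.

Lemma fD_adm_factor0 a : hm0 fD (adm_factor0 a) = adm_f0 a.
Proof.
by have [b ->] := qpi_surj a; rewrite adm_factor0_pi fD_ext_factor adm_f0_pi.
Qed.

Lemma gD_adm_factor0 a : hm0 gD (adm_factor0 a) = adm_g0 a.
Proof.
by have [b ->] := qpi_surj a; rewrite adm_factor0_pi gD_ext_factor adm_g0_pi.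
Qed.

Lemma adm_factor_lin a (x y : adm1) :
  psi (a *: x + y) = adm_factor0 a *: psi x + psi y.
Proof.
apply: psiE; rewrite hm1D hm1Z ?fD_psi ?gD_psi.
  by rewrite fD_adm_factor0.
by rewrite gD_adm_factor0.
Qed.

Lemma adm_factor_d (x : adm1) : dgd (psi x) = adm_factor0 (adm_d x).
Proof.
rewrite adm_factor0_pi /ext_factor /= -hm_d -psi_unit sK -dgdD -psiD.
case: x => x y; congr (dgd (psi _)).
by congr (_, _); rewrite /= ?addr0 // addrC subrK.
Qed.

Definition adm_factor : DGHom adm_dgr N :=
  @DGHomMk adm_dgr N adm_factor0 psi adm_factor_lin adm_factor_d.

Lemma adm_factor_f : dghom_comp_eq fD adm_factor adm_f.
Proof. by split=> [a|x]; [exact: fD_adm_factor0 | exact: fD_psi]. Qed.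

Lemma adm_factor_g : dghom_comp_eq gD adm_factor adm_g.
Proof. by split=> [a|x]; [exact: gD_adm_factor0 | exact: gD_psi]. Qed.

Definition adm_factor_corr : CorrHom adm_corr D :=
  @CorrHomMk _ _ adm_corr D adm_factor adm_factor_f adm_factor_g.

Lemma adm_factor_unit : corrhom_comp_eq adm_factor_corr adm_unit_corr h.
Proof.
split=> [a|x]; last exact: psi_unit.
by rewrite [LHS](adm_factor0_pi (a, 0)) /ext_factor psi00 dgd0 addr0.
Qed.

Lemma adm_factor_unique (k : CorrHom adm_corr D) :
  corrhom_comp_eq k adm_unit_corr h -> corrhom_eq k adm_factor_corr.
Proof.
case=> k_unit0 _; have k1 x : hm1 (ch k) x = psi x.
  by apply/esym/psiE; [exact: (ch_f k).2 | exact: (ch_g k).2].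
split=> [a|x]; last exact: k1.
have [b ->] := qpi_surj a.
rewrite [RHS](adm_factor0_pi b) pi_decomp rmorphD k_unit0.
by rewrite -[adm_d _]/(dgd ((0, b.2) : dg1 adm_dgr)) -hm_d k1.
Qed.

End AdmissibleHull.

Theorem proposition4p3p1 (R1 R2 : DGR) (C : Corr R1 R2) :
  is_anamorphism C ->
  exists (A : Corr R1 R2) (eta : CorrHom C A),
    is_admissible A /\
    forall (D : Corr R1 R2) (h : CorrHom C D), is_admissible D ->
      exists h' : CorrHom A D,
        corrhom_comp_eq h' eta h /\
        forall h'' : CorrHom A D, corrhom_comp_eq h'' eta h -> corrhom_eq h'' h'.
Proof.
case: C => M f g [qf [surj0 surj1]].
have [s sK] : {s : dg1 R1 -> dg1 M | cancel s (hm1 f)}.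
  by exists (fun y => sval (cid (surj1 y))) => y; case: cid.
exists (adm_corr g sK), (adm_unit_corr g sK).
split; first exact: adm_corr_admissible.
move=> D h [_ [psi psiK psiVK]].
exists (adm_factor_corr sK h psiK psiVK).
by split; [exact: adm_factor_unit | exact: adm_factor_unique].
Qed.
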